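(* Let $n\ge1$ and $\mathcal{K}=\{\texttt{a},\texttt{b}\}$ (so $k=2$). For the uniform prior $\pi$ on $\mathcal{K}^n$ and the single-target gain function $g_{\rm T}$, the posterior vulnerability of the shuffle channel is $$V_{\rm T}[\pi\triangleright\mathbf{S}]=\frac{1}{2^n}\sum_{i=0}^{n}\binom{n}{i}\frac{\max(i,n-i)}{n}.$$
   Context: A dataset is $x=(x_0,\dots,x_{n-1})\in\mathcal{K}^n$; its histogram $h(x)$ is the map $\kappa\mapsto|\{i:x_i=\kappa\}|$; $\#z$ is the number of datasets with histogram $z$. Shuffle channel $\mathbf{S}:\mathcal{K}^n\to\mathcal{K}^n$: $\mathbf{S}_{x,y}=1/\#h(x)$ if $h(y)=h(x)$, else $0$. Uniform prior: $\pi_x=1/2^n$. Single-target gain function: $\mathcal{W}=\mathcal{K}$, $g_{\rm T}(w,x)=1$ if $x_0=w$, else $0$. Posterior vulnerability: $V_{\rm T}[\pi\triangleright\mathbf{C}]=\sum_{y}\max_{w\in\mathcal{W}}\sum_{x}\pi_x\mathbf{C}_{x,y}g_{\rm T}(w,x)$. *)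

From HB Require Import structures.
From mathcomp Require Import all_boot all_order all_algebra.
Set Implicit Arguments. Unset Strict Implicit. Unset Printing Implicit Defensive.
Import Order.TTheory GRing.Theory Num.Theory.
Local Open Scope ring_scope.

Inductive letter := la | lb.
Definition letter_to_bool (x : letter) : bool := if x is la then true else false.
Definition bool_to_letter (b : bool) : letter := if b then la else lb.
Lemma letter_boolK : cancel letter_to_bool bool_to_letter. Proof. by case. Qed.
HB.instance Definition _ := Finite.copy letter (can_type letter_boolK).

Definition dataset (K : finType) (n : nat) := n.-tuple K.

Definition hist (K : finType) (n : nat) (x : n.-tuple K) : {ffun K -> nat} :=
  [ffun k => count_mem k x].

Definition nhist (K : finType) (n : nat) (z : {ffun K -> nat}) : nat :=
  #|[set x : n.-tuple K | hist x == z]|.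

Definition shuffle (R : realFieldType) (K : finType) (n : nat)
  (x y : n.-tuple K) : R :=
  if hist y == hist x then 1 / (nhist n (hist x))%:R else 0.

Definition uniform_prior (R : realFieldType) (K : finType) (n : nat)
  (x : n.-tuple K) : R := 1 / (#|K| ^ n)%:R.

Definition gainT (R : realFieldType) (K : finType) (n : nat)
  (w : K) (x : n.-tuple K) : R :=
  match x : seq K with w' :: _ => if w' == w then 1 else 0 | [::] => 0 end.

Definition post_vuln (R : realFieldType) (K : finType) (n : nat)
  (g : K -> n.-tuple K -> R) (pi : n.-tuple K -> R)
  (C : n.-tuple K -> n.-tuple K -> R) : R :=
  \sum_(y : n.-tuple K) \big[Num.max/0]_(w : K) \sum_(x : n.-tuple K) pi x * C x y * g w x.

From HB Require Import structures.
From mathcomp Require Import all_boot all_order all_algebra perm.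
Import Order.TTheory GRing.Theory Num.Theory.
Local Open Scope ring_scope.

(* Given the shuffled output y, the datasets x with S_{x,y} > 0 are those with
   the histogram of y, and they are exchangeable: swapping positions 0 and j is
   a bijection between those with x_0 = w and those with x_j = w.  Counting the
   pairs (x, j) with x_j = w in two ways shows that a fraction count_w(y)/n of
   them start with w, so V_T = k^-n sum_y max_w count_w(y)/n for any alphabet.
   On {a, b} the maximum is max(i, n - i) with i the number of a's in y, and the
   C(n, i) datasets with i a's correspond to their i-subsets of a-positions. *)

Lemma card_set_sum (T : finType) (P : pred T) : #|[set x | P x]| = (\sum_x P x)%N.
Proof. by rewrite -sum1dep_card big_mkcond. Qed.

Lemma count_mem_tnth (T : eqType) n (x : n.-tuple T) (w : T) :
  count_mem w x = (\sum_(j < n) (tnth x j == w))%N.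
Proof.
by rewrite -[in LHS](map_tnth_enum x) count_map -sum1_count big_mkcond big_enum.
Qed.

Lemma natr_maxn (R : numDomainType) (i j : nat) :
  (maxn i j)%:R = Num.max i%:R j%:R :> R.
Proof.
by have [ij|/ltnW ji] := leqP i j; [rewrite max_r | rewrite max_l]; rewrite ?ler_nat.
Qed.

Section Exchangeability.
Variables (K : finType) (n : nat).

Definition swap_tuple (j k : 'I_n) (x : n.-tuple K) : n.-tuple K :=
  [tuple tnth x (tperm j k i) | i < n].

Lemma swap_tupleK j k : involutive (swap_tuple j k).
Proof.
by move=> x; apply: eq_from_tnth => i; rewrite !tnth_map !tnth_ord_tuple tpermK.
Qed.

Lemma tnth_swap_tuple j k x : tnth (swap_tuple j k x) j = tnth x k.
Proof. by rewrite tnth_map tnth_ord_tuple tpermL. Qed.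

Lemma hist_swap_tuple j k x : hist (swap_tuple j k x) = hist x.
Proof.
have /seq.permP eq_count : perm_eq (swap_tuple j k x) x.
  by apply/tuple_permP; exists (tperm j k).
by apply/ffunP => w; rewrite !ffunE eq_count.
Qed.

Lemma card_hist_tnth_indep (h : {ffun K -> nat}) (w : K) (j k : 'I_n) :
  #|[set x : n.-tuple K | (hist x == h) && (tnth x j == w)]| =
  #|[set x : n.-tuple K | (hist x == h) && (tnth x k == w)]|.
Proof.
rewrite -(on_card_preimset (f := swap_tuple j k)); last first.
  by apply: onW_bij; apply: inv_bij; apply: swap_tupleK.
by apply: eq_card => x; rewrite !inE hist_swap_tuple tnth_swap_tuple.
Qed.

Lemma card_hist_tnth (h : {ffun K -> nat}) (w : K) (j : 'I_n) :
  (n * #|[set x : n.-tuple K | (hist x == h) && (tnth x j == w)]|)%N =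
  (h w * nhist n h)%N.
Proof.
rewrite -[X in (X * _)%N]card_ord -sum_nat_const.
under eq_bigr => k _ do rewrite (card_hist_tnth_indep h w j k) card_set_sum.
rewrite exchange_big /nhist card_set_sum big_distrr /=; apply: eq_bigr => x _.
have [<-|_] := eqP; last by rewrite big1 ?muln0.
by rewrite ffunE count_mem_tnth muln1.
Qed.

End Exchangeability.

Lemma gainT_head (R : realFieldType) (K : finType) m (w : K) (x : m.+1.-tuple K) :
  gainT R w x = (tnth x ord0 == w)%:R.
Proof. by rewrite [x]tuple_eta /gainT /=; case: ifP. Qed.

Lemma shuffle_uniform_gain (R : realFieldType) (K : finType) m
    (w : K) (y : m.+1.-tuple K) :
  \sum_x uniform_prior R x * shuffle R x y * gainT R w x =
  1 / (#|K| ^ m.+1)%:R * ((count_mem w y)%:R / m.+1%:R).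
Proof.
set A := [set x : m.+1.-tuple K | (hist x == hist y) && (tnth x ord0 == w)].
have nhist_neq0 : (nhist m.+1 (hist y))%:R != 0 :> R.
  by rewrite pnatr_eq0 -lt0n; apply/card_gt0P; exists y; rewrite inE.
have card_A : #|A|%:R = (count_mem w y)%:R * (nhist m.+1 (hist y))%:R / m.+1%:R :> R.
  have := @card_hist_tnth _ _ (hist y) w (ord0 : 'I_m.+1); rewrite ffunE.
  by move/(congr1 (fun k => k%:R : R)); rewrite !natrM => <-; rewrite mulrC mulKf ?pnatr_eq0.
transitivity (1 / (#|K| ^ m.+1)%:R / (nhist m.+1 (hist y))%:R * #|A|%:R : R).
  rewrite -sum1_card natr_sum mulr_sumr [RHS]big_mkcond; apply: eq_bigr => x _.
  rewrite /uniform_prior /shuffle gainT_head inE.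
  case: (hist y =P hist x) => [<-|/eqP/negbTE hist_neq]; last first.
    by rewrite (eq_sym (hist x)) hist_neq !(mulr0, mul0r).
  by rewrite eqxx; case: (_ == w); rewrite /= ?(mulr1, mulr0) ?mul1r.
rewrite mulrAC -mulrA card_A; congr (_ * _).
by rewrite mulrAC mulfK.
Qed.

Lemma post_vuln_shuffle_uniform (R : realFieldType) (K : finType) m :
  post_vuln (@gainT R K m.+1) (@uniform_prior R K m.+1) (@shuffle R K m.+1) =
  1 / (#|K| ^ m.+1)%:R *
    \sum_(y : m.+1.-tuple K) (\max_(w : K) count_mem w y)%:R / m.+1%:R.
Proof.
rewrite /post_vuln mulr_sumr; apply: eq_bigr => y _.
rewrite (eq_bigr _ (fun w _ => shuffle_uniform_gain R K m w y)).
pose f k : R := 1 / (#|K| ^ m.+1)%:R * (k%:R / m.+1%:R).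
have f_maxn : {morph f : i j / maxn i j >-> Num.max i j}.
  by move=> i j; rewrite /f natr_maxn maxr_pMl ?invr_ge0 // maxr_pMr // divr_ge0.
have f0 : f 0%N = 0 by rewrite /f mul0r mulr0.
by rewrite -[RHS]/(f _) (big_morph f f_maxn f0).
Qed.

Lemma card_letter : #|{: letter}| = 2%N.
Proof.
by rewrite -(@bij_eq_card _ _ bool_to_letter) ?card_bool //; exists letter_to_bool; case.
Qed.

Lemma count_lb n (x : n.-tuple letter) : count_mem lb x = (n - count_mem la x)%N.
Proof.
have split_n := count_predC (pred1 la) x; rewrite size_tuple in split_n.
by rewrite -[X in (X - _)%N]split_n addKn; apply: eq_count; case.
Qed.

Lemma bigmax_count_letter n (x : n.-tuple letter) :
  (\max_(w : letter) count_mem w x)%N = maxn (count_mem la x) (n - count_mem la x).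
Proof.
rewrite (bigD1 la) // (bigD1 lb) // big_pred0 ?maxn0 ?count_lb // => w.
by case: w.
Qed.

Section Positions.
Variable n : nat.

Definition la_positions (x : n.-tuple letter) : {set 'I_n} := [set j | tnth x j == la].

Definition tuple_of_positions (A : {set 'I_n}) : n.-tuple letter :=
  [tuple if j \in A then la else lb | j < n].

Lemma la_positionsK : cancel la_positions tuple_of_positions.
Proof.
move=> x; apply: eq_from_tnth => j; rewrite tnth_map tnth_ord_tuple inE.
by case: (tnth x j).
Qed.

Lemma tuple_of_positionsK : cancel tuple_of_positions la_positions.
Proof.
move=> A; apply/setP => j; rewrite inE tnth_map tnth_ord_tuple.
by case: (j \in A).
Qed.

Lemma card_la_positions x : #|la_positions x| = count_mem la x.
Proof. by rewrite card_set_sum count_mem_tnth. Qed.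

Lemma card_count_la i : #|[set x : n.-tuple letter | count_mem la x == i]| = 'C(n, i).
Proof.
rewrite -[n in 'C(n, _)]card_ord -card_draws.
rewrite -(on_card_preimset (f := la_positions)); last first.
  by apply: onW_bij; exists tuple_of_positions; [exact: la_positionsK | exact: tuple_of_positionsK].
by apply: eq_card => x; rewrite !inE card_la_positions.
Qed.

End Positions.

Lemma sum_by_count_la (R : realFieldType) n (G : nat -> R) :
  \sum_(y : n.-tuple letter) G (count_mem la y) = \sum_(i < n.+1) 'C(n, i)%:R * G i.
Proof.
under [RHS]eq_bigr => i _ do rewrite -card_count_la card_set_sum natr_sum mulr_suml.
rewrite exchange_big; apply: eq_bigr => y _.
have y_le : (count_mem la y < n.+1)%N.
  by rewrite ltnS -[X in (_ <= X)%N](size_tuple y) count_size.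
rewrite (bigD1 (Ordinal y_le)) //= eqxx mul1r big1 ?addr0 // => i.
by rewrite -val_eqE /= eq_sym => /negbTE ->; rewrite mul0r.
Qed.

Theorem mainTheorem9 (R : realFieldType) (n : nat) (hn : (1 <= n)%N) :
  post_vuln (@gainT R letter n) (@uniform_prior R letter n) (@shuffle R letter n)
  = 1 / (2 ^ n)%:R *
    \sum_(i < n.+1) 'C(n, i)%:R * ((maxn i (n - i))%:R / n%:R).
Proof.
case: n hn => // m _.
rewrite post_vuln_shuffle_uniform card_letter.
under eq_bigr => y _ do rewrite bigmax_count_letter.
by rewrite (sum_by_count_la _ _ (fun i => (maxn i (m.+1 - i))%:R / m.+1%:R)).
Qed.
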